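(* Let $p,n\in\mathbb N$ with $p\ge n\ge 10$, and write $p=k(n-1)+r$ with $k\in\mathbb N$ and $r\in\{0,1,2,n-5,n-4,n-3,n-2\}$. Then $$\mathrm{ex}(p;T_n^3)=\frac{(n-2)p-r(n-1-r)}2.$$
   Context: All graphs are finite simple graphs. For a graph $L$, $\mathrm{ex}(p;L)$ denotes the maximum number of edges in a graph on $p$ vertices that contains no subgraph isomorphic to $L$. For $n\ge 6$, $T_n^3$ is the tree on vertex set $\{v_0,\ldots,v_{n-1}\}$ with edge set $\{v_0v_1,v_0v_2,\ldots,v_0v_{n-4},\ v_1v_{n-3},\ v_1v_{n-2},\ v_1v_{n-1}\}$. $\mathbb N=\{1,2,\ldots\}$. *)

From mathcomp Require Import all_boot.
Unset Printing Implicit Defensive.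

(* Each (unordered) edge {x,y} corresponds to the pairs (x,y),(y,x). *)
Definition simple_graph (p : nat) (E : {set 'I_p * 'I_p}) : bool :=
  [forall x : 'I_p, (x, x) \notin E] &&
  [forall x : 'I_p, forall y : 'I_p, ((x, y) \in E) ==> ((y, x) \in E)].

Definition nedges (p : nat) (E : {set 'I_p * 'I_p}) : nat :=
  #|[set e in E | (e.1 < e.2)%N]|.

Definition contains_sub (p m : nat) (E : {set 'I_p * 'I_p}) (L : rel 'I_m) : bool :=
  [exists f : {ffun 'I_m -> 'I_p},
     injectiveb f && [forall i, forall j, L i j ==> ((f i, f j) \in E)]].

Definition ex (p m : nat) (L : rel 'I_m) : nat :=
  \max_(E : {set 'I_p * 'I_p} | @simple_graph p E && ~~ @contains_sub p m E L) @nedges p E.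

Definition T3_edge (n a b : nat) : bool :=
  ((a == 0) && (1 <= b <= n - 4)) || ((a == 1) && (n - 3 <= b <= n - 1)).

Definition T3 (n : nat) : rel 'I_n :=
  fun i j => T3_edge n i j || T3_edge n j i.
Arguments ex p {m} L.

From mathcomp Require Import all_boot zify.

(* The lower bound is attained by k disjoint copies of K_(n-1) and one K_r:
   T_n^3 is connected on n vertices, so it fits in no component.
   For the upper bound, T_n^3 is a double star whose adjacent centres have
   n - 4 and 4 neighbours, so in a T_n^3-free graph two adjacent vertices of
   degrees at least n - 4 and 4 have fewer than n neighbours altogether.
   Writing D(W) for the degree sum of the subgraph induced by W, we show
   D(W) + r(n-1-r) <= (n-2)|W| whenever |W| = r mod n-1, by induction on |W|
   and by cases on the maximum degree of G[W]. If it is at least n - 1, all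
   neighbours of a vertex of maximum degree have degree at most 3, and double
   counting suffices because r(n-1-r) <= 4(n-5). If it is n - 2 or n - 3, a
   closed neighbourhood of maximum degree, completed by a well-chosen vertex
   in the second case, is a set of n - 1 vertices meeting at most
   (n-1)(n-2)/2 edges; delete it and use induction. If it is at most n - 4,
   then D(W) <= (n-4)|W| and r(n-1-r) <= 2|W|. The two inequalities on
   r(n-1-r) are where the admissible residues come from. *)

Lemma card_disjoint_setU {T : finType} (A B : {set T}) :
  [disjoint A & B] -> #|A :|: B| = #|A| + #|B|.
Proof. by move=> dAB; rewrite cardsU (disjoint_setI0 dAB) cards0 subn0. Qed.

Lemma exists_subset_card {T : finType} {S : {set T}} {k} :
  k <= #|S| -> exists2 C : {set T}, C \subset S & #|C| = k.
Proof.
case/card_geqP => s [us size_s sS]; exists [set x in s].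
  by apply/subsetP => x; rewrite inE => /sS.
by rewrite cardsE (card_uniqP us) size_s.
Qed.

Lemma exists_disjoint_subsets {T : finType} {A B : {set T}} {m k} :
  m <= #|A| -> k <= #|B| -> m + k <= #|A :|: B| ->
  exists A1 B1 : {set T},
    [/\ A1 \subset A, B1 \subset B, #|A1| = m, #|B1| = k & [disjoint A1 & B1]].
Proof.
move=> hA hB hAB.
suff [B1 sB1 [cB1 hAB1]] : exists2 B1 : {set T}, B1 \subset B & #|B1| = k /\ m <= #|A :\: B1|.
  have [A1 sA1 cA1] := exists_subset_card hAB1.
  exists A1, B1; split=> //; first exact: subset_trans sA1 (subsetDl _ _).
  by apply: disjointWl sA1 _; rewrite disjoints_subset setDE subsetIr.
have eAB : #|A :|: B| = #|A| + #|B :\: A|.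
  by rewrite cardsU; have := cardsID A B; rewrite setIC; lia.
(* Take B1 inside B :\: A as far as possible. *)
have [hK|hK] := leqP k #|B :\: A|.
  have [C sC cC] := exists_subset_card hK.
  exists C; first exact: subset_trans sC (subsetDl _ _).
  split=> //; suff -> : A :\: C = A by [].
  apply/setDidPl; rewrite disjoint_sym; apply: disjointWl sC _.
  by rewrite disjoints_subset setDE subsetIr.
have hI : k - #|B :\: A| <= #|B :&: A| by have := cardsID A B; lia.
have [C sC cC] := exists_subset_card hI.
have /andP[sCB sCA] : (C \subset B) && (C \subset A) by rewrite -subsetI.
exists ((B :\: A) :|: C); first by rewrite subUset subsetDl.
have dKC : [disjoint B :\: A & C].
  rewrite disjoint_sym; apply: disjointWl sCA _.
  by rewrite disjoints_subset setDE setCI setCK subsetUr.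
rewrite card_disjoint_setU // cC; split; first lia.
have -> : A :\: ((B :\: A) :|: C) = A :\: C.
  by apply/setP => x; rewrite !inE; case: (x \in A); rewrite ?andbT ?andbF.
by have := cardsID C A; rewrite (setIidPr sCA); lia.
Qed.

Definition admissible_rem (n r : nat) : bool :=
  r \in [:: 0; 1; 2; n - 5; n - 4; n - 3; n - 2].

Lemma admissible_rem_lt {n r} : 3 < n -> admissible_rem n r -> r < n - 1.
Proof. by move=> n3; rewrite /admissible_rem !inE => /or4P[| | | /or4P[]] /eqP ->; lia. Qed.

Lemma admissible_rem_mul_le4 {n r} :
  8 <= n -> admissible_rem n r -> r * (n - 1 - r) <= 4 * (n - 5).
Proof. by move=> n8; rewrite /admissible_rem !inE => /or4P[| | | /or4P[]] /eqP ->; nia. Qed.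

Lemma admissible_rem_mul_le2 {n r} :
  admissible_rem n r -> r * (n - 1 - r) <= 2 * (n - 1 + r).
Proof. by rewrite /admissible_rem !inE => /or4P[| | | /or4P[]] /eqP ->; nia. Qed.

(** * Degrees in induced subgraphs *)

Section Graph.

Context {V : finType} (adj : rel V).
Implicit Types (A B Q W X : {set V}) (u v x y z : V).

Definition nbhd W x : {set V} := [set y in W | adj x y].
Definition cnbhd W x : {set V} := x |: nbhd W x.
Definition deg W x : nat := #|nbhd W x|.
Definition deg_sum W : nat := \sum_(x in W) deg W x.
(* Twice the number of edges of G[W] meeting X. *)
Definition deg_sum_drop W X : nat := \sum_(x in X) (deg W x + deg (W :\: X) x).

Lemma in_nbhd W x y : (y \in nbhd W x) = (y \in W) && adj x y.
Proof. by rewrite inE. Qed.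

Lemma nbhd_sub W x : nbhd W x \subset W.
Proof. by apply/subsetP => y; rewrite in_nbhd => /andP[]. Qed.

Lemma nbhdS {W1 W2} x : W1 \subset W2 -> nbhd W1 x \subset nbhd W2 x.
Proof.
by move=> sW12; apply/subsetP => y; rewrite !in_nbhd => /andP[/(subsetP sW12) -> ->].
Qed.

Lemma degS {W1 W2} x : W1 \subset W2 -> deg W1 x <= deg W2 x.
Proof. by move=> sW12; apply/subset_leq_card/nbhdS. Qed.

Lemma deg_subD W X x : deg (W :\: X) x <= deg W x.
Proof. exact/degS/subsetDl. Qed.

Lemma cnbhd_sub {W x} : x \in W -> cnbhd W x \subset W.
Proof. by move=> xW; rewrite subUset sub1set xW nbhd_sub. Qed.

Lemma deg_E W x : deg W x = \sum_(y in W) adj x y.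
Proof.
rewrite /deg -sum1_card [LHS]big_mkcond [RHS]big_mkcond /=.
by apply: eq_bigr => y _; rewrite in_nbhd; case: (y \in W); case: (adj x y).
Qed.

Lemma degD {W X} x : X \subset W -> deg W x = deg X x + deg (W :\: X) x.
Proof. by move=> sXW; rewrite !deg_E (big_setID X) /= (setIidPr sXW). Qed.

Lemma deg_cnbhd_out W x : deg (W :\: cnbhd W x) x = 0.
Proof.
apply/eqP; rewrite cards_eq0; apply/eqP/setP => y; rewrite !inE.
by case: (y == x); case: (y \in W); case: (adj x y).
Qed.

Hypothesis adj_sym : symmetric adj.

Lemma sum_deg_sym A B : \sum_(a in A) deg B a = \sum_(b in B) deg A b.
Proof.
under eq_bigr do rewrite deg_E.
rewrite exchange_big /=; apply: eq_bigr => b _; rewrite deg_E.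
by apply: eq_bigr => a _; rewrite adj_sym.
Qed.

Lemma deg_sumD {W X} : X \subset W -> deg_sum W = deg_sum (W :\: X) + deg_sum_drop W X.
Proof.
move=> sXW; rewrite /deg_sum /deg_sum_drop (big_setID X) /= (setIidPr sXW).
under [in X in _ + X = _]eq_bigr => y _ do rewrite (degD y sXW).
rewrite big_split /= (sum_deg_sym (W :\: X) X) big_split /=; lia.
Qed.

Hypothesis adj_irr : irreflexive adj.

Lemma nbhd_irr W x : x \notin nbhd W x.
Proof. by rewrite in_nbhd adj_irr andbF. Qed.

Lemma card_cnbhd W x : #|cnbhd W x| = (deg W x).+1.
Proof. by rewrite cardsU1 nbhd_irr. Qed.

Lemma deg_set1 z : deg [set z] z = 0.
Proof.
apply/eqP; rewrite cards_eq0; apply/eqP/setP => y; rewrite in_nbhd !inE.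
by case: eqP => [->|]; rewrite ?adj_irr ?andbF.
Qed.

Lemma deg_sum_drop_setU1 {W Q z} : Q \subset W -> z \in W :\: Q ->
  deg_sum_drop W (z |: Q) = deg_sum_drop W Q + 2 * deg (W :\: (z |: Q)) z.
Proof.
move=> sQW zWQ.
have eWzQ : W :\: (z |: Q) = (W :\: Q) :\: [set z] by rewrite setDDl setUC.
have szWQ : [set z] \subset W :\: Q by rewrite sub1set.
have sQzW : z |: Q \subset W.
  by rewrite subUset sub1set sQW andbT; move: zWQ; rewrite inE => /andP[].
have := deg_sumD sQzW; rewrite (deg_sumD sQW) (deg_sumD szWQ) -eWzQ.
rewrite [deg_sum_drop (W :\: Q) _]/deg_sum_drop big_set1 (degD z szWQ) deg_set1 -eWzQ; lia.
Qed.

Lemma deg_sum_le_complete W : deg_sum W <= #|W| * #|W|.-1.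
Proof.
rewrite /deg_sum -sum_nat_const; apply: leq_sum => x xW.
rewrite (cardsD1 x W) xW add1n /=; apply/subset_leq_card/subsetP => y.
rewrite in_nbhd !inE => /andP[-> axy]; rewrite andbT.
by apply: contraTneq axy => ->; rewrite adj_irr.
Qed.

(** * Double-star-free graphs *)

Variable n : nat.

(* The form in which T_n^3-freeness is used: the centres v0, v1 of T_n^3
   have n - 5 and 3 further neighbours. *)
Definition double_star_free : Prop :=
  forall W x y, adj x y -> n - 4 <= deg W x -> 4 <= deg W y ->
    #|nbhd W x :|: nbhd W y| < n.

Lemma T3_embedding {x y} A B : 5 <= n -> adj x y ->
  {in A, forall a, adj x a} -> {in B, forall b, adj y b} ->
  y \notin A -> x \notin B -> [disjoint A & B] -> #|A| = n - 5 -> #|B| = 3 ->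
  exists f : 'I_n -> V, injective f /\ forall i j, T3 n i j -> adj (f i) (f j).
Proof.
move=> n5 axy xA yB yA xB dAB cA cB.
have xA' : x \notin A by apply/negP => /xA; rewrite adj_irr.
have yB' : y \notin B by apply/negP => /yB; rewrite adj_irr.
have xy : x != y by apply: contraTneq axy => ->; rewrite adj_irr.
(* v0 = x, v1 = y, v2 .. v_(n-4) in A and v_(n-3) .. v_(n-1) in B. *)
set s := x :: y :: (enum A ++ enum B).
have size_s : size s = n by rewrite /= size_cat -!cardE cA cB; lia.
have uniq_s : uniq s.
  rewrite /s /= !inE !mem_cat !mem_enum (negbTE xy) (negbTE xA') (negbTE xB).
  rewrite (negbTE yA) (negbTE yB') /= cat_uniq !enum_uniq andbT /=.
  by apply/hasPn => b; rewrite !mem_enum => bB; rewrite (disjointFl dAB bB).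
have sA j : 1 < j < n - 3 -> nth x s j \in A.
  move=> /andP[j1 j2]; case: j j1 j2 => [|[|j]] //= _ hj.
  by rewrite nth_cat -cardE cA ifT; [rewrite -mem_enum mem_nth // -cardE cA|]; lia.
have sB j : n - 3 <= j < n -> nth x s j \in B.
  move=> /andP[j1 j2]; case: j j1 j2 => [|[|j]] /=; try lia; move=> hj1 hj2.
  rewrite nth_cat -cardE cA ifF; last lia.
  by rewrite -mem_enum mem_nth // -cardE cB; lia.
have edge i j : i < n -> j < n -> T3_edge n i j -> adj (nth x s i) (nth x s j).
  move=> hi hj; rewrite /T3_edge => /orP[] /andP[/eqP -> hj'].
    by case: j hj hj' => [|[|j]] //= hj hj'; apply/xA/(sA j.+2); lia.
  by apply/yB/sB; lia.
exists (fun i => nth x s i); split.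
  by move=> i j /eqP; rewrite nth_uniq ?size_s // => /eqP/val_inj.
by move=> i j /orP[]; [|rewrite adj_sym]; apply: edge.
Qed.

Lemma double_star_free_of_T3_free : 5 <= n ->
  ~ (exists f : 'I_n -> V, injective f /\ forall i j, T3 n i j -> adj (f i) (f j)) ->
  double_star_free.
Proof.
move=> n5 noT3 W x y axy hx hy; rewrite ltnNge; apply/negP => hU; apply: noT3.
set A := nbhd W x :\ y; set B := nbhd W y :\ x.
have cA : n - 5 <= #|A|.
  by have := cardsD1 y (nbhd W x); have := leq_b1 (y \in nbhd W x); rewrite -/A /deg in hx *; lia.
have cB : 3 <= #|B|.
  by have := cardsD1 x (nbhd W y); have := leq_b1 (x \in nbhd W y); rewrite -/B /deg in hy *; lia.
have cAB : n - 5 + 3 <= #|A :|: B|.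
  have : nbhd W x :|: nbhd W y \subset x |: (y |: (A :|: B)).
    by apply/subsetP => z; rewrite !inE; case: (z == x); case: (z == y).
  move/subset_leq_card; rewrite !cardsU1; lia.
have [A1 [B1 [sA1 sB1 cA1 cB1 dAB]]] := exists_disjoint_subsets cA cB cAB.
have sA1' a : a \in A1 -> (a != y) && adj x a.
  by move/(subsetP sA1); rewrite !inE => /andP[-> /andP[]].
have sB1' b : b \in B1 -> (b != x) && adj y b.
  by move/(subsetP sB1); rewrite !inE => /andP[-> /andP[]].
apply: (T3_embedding A1 B1 n5 axy) => //.
- by move=> a /sA1' /andP[].
- by move=> b /sB1' /andP[].
- by apply/negP => /sA1'; rewrite eqxx.
- by apply/negP => /sB1'; rewrite eqxx.
Qed.

Hypotheses (n_ge10 : 10 <= n) (adj_free : double_star_free).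

Lemma deg_out_cnbhd_lt {W u v} : u \in W -> v \in nbhd W u ->
  n - 4 <= deg W u -> 4 <= deg W v -> deg W u + deg (W :\: cnbhd W u) v < n - 1.
Proof.
move=> uW vNu hu hv; have auv : adj u v by move: vNu; rewrite in_nbhd => /andP[].
have sub : cnbhd W u :|: nbhd (W :\: cnbhd W u) v \subset nbhd W u :|: nbhd W v.
  apply/subsetP => y; rewrite /cnbhd !inE.
  case/orP => [/orP[/eqP ->|->//]|/andP[/andP[_ ->] ->]]; last by rewrite orbT.
  by rewrite uW (adj_sym v) auv orbT.
have dis : [disjoint cnbhd W u & nbhd (W :\: cnbhd W u) v].
  by apply/pred0P => y /=; rewrite in_nbhd in_setD; case: (y \in cnbhd W u).
have := subset_leq_card sub; rewrite card_disjoint_setU // card_cnbhd.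
by have := adj_free _ _ _ auv hu hv; rewrite /deg; lia.
Qed.

Lemma deg_nbhd_high_le3 {W u v} : u \in W -> n - 1 <= deg W u -> v \in nbhd W u -> deg W v <= 3.
Proof.
move=> uW hu vNu; rewrite leqNgt; apply/negP => hv.
by have := deg_out_cnbhd_lt uW vNu (leq_trans (leq_sub2l n (isT : 1 <= 4)) hu) hv; lia.
Qed.

Lemma deg_sum_high_deg {W u} : u \in W -> n - 1 <= deg W u ->
  deg_sum W + 4 * (n - 5) <= (n - 2) * #|W|.
Proof.
move=> uW hu.
set U := [set x in W | n - 1 <= deg W x]; set L := [set x in W | deg W x <= 3].
set M := W :\: U :\: L.
have sUW : U \subset W by apply/subsetP => x; rewrite inE => /andP[].
have sLWU : L \subset W :\: U.
  by apply/subsetP => x; rewrite !inE => /andP[-> hx]; rewrite andbT -ltnNge; lia.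
have sNL x : x \in U -> nbhd W x \subset L.
  rewrite inE => /andP[xW hx]; apply/subsetP => y yN.
  by rewrite inE (deg_nbhd_high_le3 xW hx yN) andbT (subsetP (nbhd_sub _ _) _ yN).
have hU : \sum_(x in U) deg W x <= 3 * #|L|.
  apply: (@leq_trans (\sum_(x in U) deg L x)).
    by apply: leq_sum => x xU; apply/subset_leq_card/subsetP => y yN;
      rewrite in_nbhd (subsetP (sNL x xU) _ yN); move: yN; rewrite in_nbhd => /andP[].
  rewrite sum_deg_sym mulnC -sum_nat_const; apply: leq_sum => y.
  by rewrite inE => /andP[_ hy]; apply: leq_trans hy; apply/degS/subsetP => x /(subsetP sUW).
have hL : \sum_(x in L) deg W x <= 3 * #|L|.
  by rewrite mulnC -sum_nat_const; apply: leq_sum => x; rewrite inE => /andP[].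
have hM : \sum_(x in M) deg W x <= (n - 2) * #|M|.
  rewrite mulnC -sum_nat_const; apply: leq_sum => x; rewrite !inE => /and3P[_ xU xW].
  by move: xU; rewrite xW -ltnNge; lia.
have uU : u \in U by rewrite inE uW hu.
have cL : n - 1 <= #|L| := leq_trans hu (subset_leq_card (sNL u uU)).
have cU : 0 < #|U| by apply/card_gt0P; exists u.
have cW : #|W| = #|U| + #|L| + #|M|.
  by rewrite -(cardsID U W) (setIidPr sUW) -(cardsID L (W :\: U)) (setIidPr sLWU) addnA.
rewrite /deg_sum (big_setID U) /= (setIidPr sUW).
by rewrite [\sum_(i in W :\: U) _](big_setID L) /= (setIidPr sLWU) -/M cW; nia.
Qed.

Lemma deg_sum_bound_drop {W X} r : X \subset W -> #|X| = n - 1 ->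
  deg_sum_drop W X <= (n - 1) * (n - 2) ->
  deg_sum (W :\: X) + r * (n - 1 - r) <= (n - 2) * #|W :\: X| ->
  deg_sum W + r * (n - 1 - r) <= (n - 2) * #|W|.
Proof.
move=> sXW cX hdrop hWX.
have cW : #|W| = #|W :\: X| + (n - 1) by rewrite -cX -(cardsID X W) (setIidPr sXW) addnC.
by rewrite (deg_sumD sXW) cW; nia.
Qed.

Lemma deg_sum_drop_cnbhd_max {W u} : u \in W -> deg W u = n - 2 ->
  (forall x, x \in W -> deg W x <= n - 2) ->
  deg_sum_drop W (cnbhd W u) <= (n - 1) * (n - 2).
Proof.
move=> uW hu hmax; apply: (@leq_trans (\sum_(x in cnbhd W u) (n - 2))); last first.
  by rewrite sum_nat_const card_cnbhd hu mulnC; lia.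
apply: leq_sum => x xC; have xW := subsetP (cnbhd_sub uW) x xC.
have [hx|hx] := leqP (deg W x) 3; first by have := deg_subD W (cnbhd W u) x; lia.
suff -> : deg (W :\: cnbhd W u) x = 0 by rewrite addn0 hmax.
case/setU1P: xC => [->|xN]; first exact: deg_cnbhd_out.
have hu4 : n - 4 <= deg W u by rewrite hu; lia.
by have := deg_out_cnbhd_lt uW xN hu4 hx; rewrite hu; lia.
Qed.

Section SubmaximalDegree.

Context {W : {set V}} {u : V}.
Hypotheses (uW : u \in W) (hu : deg W u = n - 3).
Hypothesis hmax : forall x, x \in W -> deg W x <= n - 3.

Local Notation C := (cnbhd W u).

Lemma deg_out_cnbhd_le1 {v} : v \in nbhd W u -> 4 <= deg W v ->
  deg (W :\: C) v <= 1.
Proof.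
have hu4 : n - 4 <= deg W u by rewrite hu; lia.
by move=> vN hv; have := deg_out_cnbhd_lt uW vN hu4 hv; rewrite hu; lia.
Qed.

Lemma deg_cnbhd_excess {x} : x \in C ->
  deg W x + deg (W :\: C) x <=
    n - 3 + ((n - 4 <= deg W x) && (0 < deg (W :\: C) x)).
Proof.
move=> xC; have xW := subsetP (cnbhd_sub uW) x xC; have := hmax x xW.
case/setU1P: xC => [->|xN]; first by rewrite deg_cnbhd_out hu; lia.
have [hx|hx] := leqP (deg W x) 3; first by have := deg_subD W C x; lia.
have := deg_out_cnbhd_le1 xN hx.
by case: (leqP (n - 4) (deg W x)); case: (posnP (deg (W :\: C) x)) => [->|]; lia.
Qed.

Lemma deg_out_setU1_le2 {v z} : v \in nbhd W u -> n - 4 <= deg W v ->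
  z \in nbhd (W :\: C) v -> deg (W :\: (z |: C)) z <= 2.
Proof.
move=> vN hv zN; set Y := W :\: (z |: C).
have vW : v \in W by move: vN; rewrite in_nbhd => /andP[].
have [zWC avz] : z \in W :\: C /\ adj v z by move: zN; rewrite in_nbhd => /andP[].
have zW : z \in W by move: zWC; rewrite in_setD => /andP[].
have vC : v \in C by rewrite in_setU1 vN orbT.
have [hz|hz] := leqP (deg W z) 3.
  have sYW : z |: C \subset W by rewrite subUset sub1set zW cnbhd_sub.
  have : 0 < deg (z |: C) z.
    by apply/card_gt0P; exists v; rewrite in_nbhd in_setU1 vC orbT adj_sym.
  by have := degD z sYW; rewrite -/Y; lia.
have hv4 : 4 <= deg W v by lia.
have sY : Y \subset W :\: cnbhd W v.
  apply/subsetP => y; rewrite /Y !in_setD in_setU1 negb_or => /andP[/andP[yz yC] yW].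
  rewrite yW andbT in_setU1 negb_or; apply/andP; split; first by apply: contraNneq yC => ->.
  apply/negP; rewrite in_nbhd yW /= => avy.
  have : [set y; z] \subset nbhd (W :\: C) v.
    by rewrite subUset !sub1set zN in_nbhd in_setD yC yW avy.
  move/subset_leq_card; rewrite cards2 yz leqNgt ltnS.
  by rewrite (deg_out_cnbhd_le1 vN hv4).
have zNv : z \in nbhd W v by rewrite in_nbhd zW avz.
by have := deg_out_cnbhd_lt vW zNv hv hz; have := degS z sY; lia.
Qed.

Lemma exists_drop_cnbhd_setU1 : n - 1 <= #|W| ->
  exists2 z, z \in W :\: C &
    deg_sum_drop W (z |: C) <= (n - 1) * (n - 2).
Proof.
move=> hW.
have sCW : C \subset W := cnbhd_sub uW.
have cC : #|C| = n - 2 by rewrite card_cnbhd hu; lia.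
(* A neighbour of u of degree at least n - 4 has at most one neighbour z
   outside C; if some has one, delete that z with C, else any z will do. *)
have [heavy|light] := boolP [exists v in C, (n - 4 <= deg W v) && (0 < deg (W :\: C) v)].
  case/exists_inP: heavy => v vC /andP[hv hv0].
  have vN : v \in nbhd W u.
    by move: vC hv0; rewrite in_setU1 => /orP[/eqP ->|//]; rewrite deg_cnbhd_out.
  case/card_gt0P: hv0 => z zN.
  have zWC : z \in W :\: C by move: zN; rewrite in_nbhd => /andP[].
  exists z => //; rewrite (deg_sum_drop_setU1 sCW zWC).
  have hC : deg_sum_drop W C <= \sum_(x in C) (n - 2).
    by apply: leq_sum => x xC; have := deg_cnbhd_excess xC; case: (_ && _); lia.
  by rewrite sum_nat_const cC in hC; have := deg_out_setU1_le2 vN hv zN; nia.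
have [z zWC] : exists z, z \in W :\: C.
  by apply/card_gt0P; rewrite cardsD (setIidPr sCW) cC; lia.
exists z => //; rewrite (deg_sum_drop_setU1 sCW zWC).
have hC : deg_sum_drop W C <= \sum_(x in C) (n - 3).
  apply: leq_sum => x xC; have := deg_cnbhd_excess xC.
  by case: (boolP (_ && _)) => [hx|_]; [case/exists_inP: light; exists x | lia].
have zW : z \in W by move: zWC; rewrite in_setD => /andP[].
have := hmax z zW; have := deg_subD W (z |: C) z.
by rewrite sum_nat_const cC in hC; nia.
Qed.

End SubmaximalDegree.

Lemma deg_sum_small W : #|W| < n - 1 ->
  deg_sum W + #|W| * (n - 1 - #|W|) <= (n - 2) * #|W|.
Proof. by move=> hW; have := deg_sum_le_complete W; nia. Qed.

Lemma deg_sum_low_deg W r : admissible_rem n r -> #|W| %% (n - 1) = r ->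
  n - 1 <= #|W| -> (forall x, x \in W -> deg W x <= n - 4) ->
  deg_sum W + r * (n - 1 - r) <= (n - 2) * #|W|.
Proof.
move=> hr hWr hW hmax.
have hD : deg_sum W <= #|W| * (n - 4) by rewrite /deg_sum -sum_nat_const; apply: leq_sum.
have hq : 0 < #|W| %/ (n - 1) by rewrite divn_gt0 //; lia.
have := divn_eq #|W| (n - 1); rewrite hWr => eW.
by have := admissible_rem_mul_le2 hr; nia.
Qed.

Theorem deg_sum_bound W r : admissible_rem n r -> #|W| %% (n - 1) = r ->
  deg_sum W + r * (n - 1 - r) <= (n - 2) * #|W|.
Proof.
move=> hr; have [m] := ubnP #|W|; elim: m W => // m IH W /ltnSE hWm hWr.
have [hW|hW] := ltnP #|W| (n - 1).
  by move: hWr; rewrite modn_small // => <-; apply: deg_sum_small.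
have IHdrop X : X \subset W -> #|X| = n - 1 ->
    deg_sum (W :\: X) + r * (n - 1 - r) <= (n - 2) * #|W :\: X|.
  move=> sXW cX; have cW := cardsID X W; rewrite (setIidPr sXW) cX in cW.
  by apply: IH; [lia | rewrite -hWr -cW modnDl].
have [x0 x0W] : exists x0, x0 \in W by apply/card_gt0P; lia.
case: (@arg_maxnP _ x0 [pred x | x \in W] (deg W) x0W) => u uW hmax.
have [hu|hu] := leqP (n - 1) (deg W u).
  have n8 : 8 <= n by lia.
  by have := deg_sum_high_deg uW hu; have := admissible_rem_mul_le4 n8 hr; lia.
have [hu2|hu2] := eqVneq (deg W u) (n - 2).
  have sCW := cnbhd_sub uW; have cC : #|cnbhd W u| = n - 1 by rewrite card_cnbhd hu2; lia.
  have hmax2 x : x \in W -> deg W x <= n - 2 by move/hmax; rewrite hu2.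
  exact: deg_sum_bound_drop sCW cC (deg_sum_drop_cnbhd_max uW hu2 hmax2) (IHdrop _ sCW cC).
have [hu3|hu3] := eqVneq (deg W u) (n - 3).
  have hmax3 x : x \in W -> deg W x <= n - 3 by move/hmax; rewrite hu3.
  have [z zWC hdrop] := exists_drop_cnbhd_setU1 uW hu3 hmax3 hW.
  have sXW : z |: cnbhd W u \subset W.
    by rewrite subUset sub1set cnbhd_sub // andbT; move: zWC; rewrite in_setD => /andP[].
  have cX : #|z |: cnbhd W u| = n - 1.
    by move: zWC; rewrite in_setD => /andP[zC _]; rewrite cardsU1 zC card_cnbhd hu3; lia.
  exact: deg_sum_bound_drop sXW cX hdrop (IHdrop _ sXW cX).
apply: deg_sum_low_deg => // x /hmax; lia.
Qed.

End Graph.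

(** * Graphs on 'I_p and the extremal graph *)

Section EdgeSets.

Context {p : nat}.
Implicit Types (E : {set 'I_p * 'I_p}) (x y : 'I_p).

Definition edge_rel E : rel 'I_p := fun x y => (x, y) \in E.

Lemma simple_graphP {E} :
  simple_graph p E -> irreflexive (edge_rel E) /\ symmetric (edge_rel E).
Proof.
case/andP => /forallP irrE /forallP symE; split=> [x|x y]; first exact/negbTE/irrE.
by apply/idP/idP; [move: (symE x) | move: (symE y)] => /forallP/(_ _)/implyP; apply.
Qed.

Lemma card_edges_deg_sum E : #|E| = deg_sum (edge_rel E) setT.
Proof.
rewrite /deg_sum -sum1_card big_mkcond /=.
transitivity (\sum_x \sum_y (((x, y) \in E) : nat)).
  by rewrite pair_bigA /=; apply: eq_bigr => [[x y]] _ /=; case: ((x, y) \in E).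
by apply: eq_big => [x|x _]; rewrite ?inE // deg_E; apply: eq_bigl => y; rewrite inE.
Qed.

Lemma card_edges_simple E : simple_graph p E -> #|E| = 2 * nedges p E.
Proof.
move=> sE; have [_ symE] := simple_graphP sE; case/andP: sE => /forallP irrE _.
set E1 := [set e in E | (e.1 < e.2)%N].
pose swap (e : 'I_p * 'I_p) := (e.2, e.1).
have swapK : involutive swap by case.
have eE : E = E1 :|: swap @^-1: E1.
  apply/setP => [[x y]]; rewrite !inE /swap /=.
  have -> : ((y, x) \in E) = ((x, y) \in E) := symE y x.
  case xyE: ((x, y) \in E) => //=.
  case: ltngtP => // /val_inj eq_xy.
  by move: xyE; rewrite eq_xy (negbTE (irrE y)).
have dE : [disjoint E1 & swap @^-1: E1].
  by apply/pred0P => -[x y]; rewrite /= !inE /swap /=; case: ltngtP; rewrite ?andbF.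
rewrite /nedges -/E1 {1}eE card_disjoint_setU // card_preimset ?addnn -?mul2n //.
exact: can_inj swapK.
Qed.

End EdgeSets.

Lemma count_div_eq p d b : 0 < d -> \sum_(0 <= j < p) (j %/ d == b) = minn d (p - b * d).
Proof.
move=> d0; elim: p => [|p IHp]; first by rewrite big_geq // sub0n minn0.
rewrite big_nat_recr //= IHp eqn_leq leq_divRL // -ltnS ltn_divLR // mulSn.
by case: (leqP (b * d) p); case: (ltnP p (d + b * d)); lia.
Qed.

Lemma eq_deg_sum {V : finType} (adj1 adj2 : rel V) W :
  adj1 =2 adj2 -> deg_sum adj1 W = deg_sum adj2 W.
Proof.
by move=> e; apply: eq_bigr => x _; rewrite !deg_E; apply: eq_bigr => y _; rewrite e.
Qed.

Section BlockGraph.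

Variables (p d : nat).
Hypothesis d_gt0 : 0 < d.

Definition block_rel : rel 'I_p := fun i j => (i != j) && (i %/ d == j %/ d).
Definition block_graph : {set 'I_p * 'I_p} := [set e | block_rel e.1 e.2].

Lemma block_graph_simple : simple_graph p block_graph.
Proof.
apply/andP; split; apply/forallP => x; first by rewrite inE /block_rel /= eqxx.
apply/forallP => y; apply/implyP; rewrite !inE /block_rel /= => /andP[xy /eqP exy].
by rewrite eq_sym xy exy eqxx.
Qed.

Lemma deg_block_rel i : deg block_rel setT i = minn d (p - i %/ d * d) - 1.
Proof.
rewrite deg_E -(count_div_eq p d (i %/ d) d_gt0) big_mkord.
rewrite (eq_bigl predT) => [|j]; last by rewrite inE.
rewrite (bigD1 i) //= [in RHS](bigD1 i) //= /block_rel !eqxx /= add0n addKn.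
by apply: eq_bigr => j ji; rewrite eq_sym ji /= eq_sym.
Qed.

Lemma deg_sum_block_rel {k r} : r < d -> p = k * d + r ->
  deg_sum block_rel setT = k * d * (d - 1) + r * (r - 1).
Proof.
move=> rd hp; rewrite /deg_sum (eq_bigl predT) => [|i]; last by rewrite inE.
under eq_bigr do rewrite deg_block_rel.
set F := fun i => minn d (p - i %/ d * d) - 1.
rewrite -(big_mkord predT F) (@big_cat_nat _ _ _ (k * d)) /= ?hp ?leq_addr //.
have -> : \sum_(0 <= i < k * d) F i = \sum_(0 <= i < k * d) (d - 1).
  apply: eq_big_nat => i /andP[_ hi]; have : i %/ d < k by rewrite ltn_divLR.
  by rewrite /F hp; nia.
have -> : \sum_(k * d <= i < k * d + r) F i = \sum_(k * d <= i < k * d + r) (r - 1).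
  apply: eq_big_nat => i /andP[hi1 hi2]; rewrite /F hp.
  have -> : i %/ d = k by apply/eqP; rewrite eqn_leq leq_divRL // -ltnS ltn_divLR // mulSn; lia.
  lia.
by rewrite !sum_nat_const_nat; lia.
Qed.

Lemma block_graph_T3_free n : 5 <= n -> d < n -> ~~ contains_sub p n block_graph (T3 n).
Proof.
move=> n5 dn; apply/existsP => -[f /andP[/injectiveP finj /forallP hf]].
have same i j : T3 n i j -> f i %/ d = f j %/ d.
  by move=> ij; move: (hf i) => /forallP/(_ j)/implyP/(_ ij); rewrite inE => /andP[_ /eqP].
have n1 : 1 < n by lia.
pose v0 : 'I_n := Ordinal (ltnW n1); pose v1 : 'I_n := Ordinal n1.
have e01 : T3 n v0 v1 by rewrite /T3 /T3_edge /=; lia.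
have blk j : f j %/ d = f v0 %/ d.
  have [j0|j0] := posnP j; first by congr (f _ %/ d); apply: val_inj.
  have [hj|hj] := leqP j (n - 4); first by apply/esym/same; rewrite /T3 /T3_edge /=; lia.
  by rewrite (same v0 v1 e01); apply/esym/same; rewrite /T3 /T3_edge /=; have := ltn_ord j; lia.
pose g j : 'I_d := Ordinal (ltn_pmod (f j) d_gt0).
have ginj : injective g.
  move=> i j /(congr1 val) /= eij; apply/finj/ord_inj.
  by rewrite (divn_eq (f i) d) (divn_eq (f j) d) eij !blk.
by have := leq_card g ginj; rewrite !card_ord; lia.
Qed.

End BlockGraph.

Lemma nedges_T3_free_le {p n r E} : 10 <= n -> admissible_rem n r -> p %% (n - 1) = r ->
  simple_graph p E -> ~~ contains_sub p n E (T3 n) ->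
  2 * nedges p E + r * (n - 1 - r) <= (n - 2) * p.
Proof.
move=> n10 hr hpr sE fE; have [irrE symE] := simple_graphP sE.
have free : double_star_free (edge_rel E) n.
  apply: (double_star_free_of_T3_free _ symE irrE); first lia.
  case=> f [finj fT3]; move/negP: fE; apply; apply/existsP; exists (finfun f).
  apply/andP; split; first by apply/injectiveP => i j; rewrite !ffunE => /finj.
  by apply/forallP => i; apply/forallP => j; apply/implyP; rewrite !ffunE; apply: fT3.
rewrite -card_edges_simple // card_edges_deg_sum.
by have := @deg_sum_bound _ _ symE irrE _ n10 free setT r hr; rewrite cardsT card_ord; apply.
Qed.

Lemma nedges_block_graph {p d k r} : 0 < d -> r < d -> p = k * d + r ->
  2 * nedges p (block_graph p d) + r * (d - r) = (d - 1) * p.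
Proof.
move=> d0 rd hp; rewrite -card_edges_simple ?block_graph_simple // card_edges_deg_sum.
rewrite (eq_deg_sum _ (block_rel p d)) => [|x y]; last by rewrite /edge_rel inE.
rewrite (deg_sum_block_rel p d d0 rd hp) -addnA -mulnDr.
have -> : r * (r - 1 + (d - r)) = r * (d - 1).
  by case: r rd {hp} => [|r] rd //; congr (_ * _); lia.
by rewrite hp mulnDr mulnC [r * _]mulnC.
Qed.

Theorem theorem4p1 (p n k r : nat) :
  10 <= n -> n <= p -> 0 < k ->
  p = k * (n - 1) + r ->
  r \in [:: 0; 1; 2; n - 5; n - 4; n - 3; n - 2] ->
  ex p (T3 n) = ((n - 2) * p - r * (n - 1 - r)) %/ 2.
Proof.
move=> n10 _ _ hp hr.
have rn : r < n - 1 by apply: admissible_rem_lt hr; lia.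
have hpr : p %% (n - 1) = r by rewrite hp modnMDl modn_small.
have extremal : 2 * nedges p (block_graph p (n - 1)) + r * (n - 1 - r) = (n - 2) * p.
  have -> : n - 2 = n - 1 - 1 by lia.
  by apply: nedges_block_graph rn hp; lia.
apply/eqP; rewrite eqn_leq; apply/andP; split.
  apply/bigmax_leqP => E /andP[sE fE]; rewrite leq_divRL //.
  by have := nedges_T3_free_le n10 hr hpr sE fE; lia.
have extremal_free : simple_graph p (block_graph p (n - 1)) &&
    ~~ contains_sub p n (block_graph p (n - 1)) (T3 n).
  by rewrite block_graph_simple block_graph_T3_free //; lia.
rewrite /ex; apply: leq_trans _ (@leq_bigmax_cond _ _ (nedges p) _ extremal_free).
by rewrite -extremal addnK mulKn.
Qed.
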